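(* Assume the Margin assumption and Boundedness. For agents $A_0,\dots,A_T\in\mathcal{A}$, let $(y_t,b_t)$ be generated by the projected strategic perceptron with $\mathbb{L}=\mathbb{R}^d\times\mathbb{R}$ and $\gamma=1$, and let $\mathcal{M}_T$ be its set of mistake times. Then $$\sum_{t\in\mathcal{M}_T}L_{\mathrm{hinge}}\Big(\big(\tfrac{y_*}{d_*\|y_*\|_*},\tfrac{b_*}{d_*\|y_*\|_*}\big);(s(A_t,y_t,b_t),1),\ell(A_t)\Big)\le\frac{2}{cd_*}|\mathcal{M}_T|,$$ and consequently $$|\mathcal{M}_T|\le\frac{\|y_*\|_2^2+b_*^2}{\|y_*\|_*^2}\cdot\frac{\widetilde D^2+1}{\max\{0,d_*-2/c\}^2}$$ (in particular $|\mathcal{M}_T|$ is bounded independently of $T$ when $d_*>2/c$).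
   Context: Setting: $\mathcal{A}\subseteq\mathbb{R}^d$, labels $\ell(A)\in\{\pm1\}$; $\operatorname{sign}(0)=+1$; norm $\|\cdot\|$ with dual $\|y\|_*=\max_{\|w\|\le1}y^\top w$; constant $c>0$; a fixed selection $v$ with $v(0)=0$ and $v(y)\in\arg\max_{\|w\|\le1}y^\top w$ for $y\ne0$, with $v(\lambda y)=v(y)$ for $\lambda>0$. Predicted label $\hat\ell(x,y,b)=\operatorname{sign}(y^\top x+b-2\|y\|_*/c)$. Response: for $y\ne0$, $r(A,y,b)=A+(\tfrac2c-\tfrac{y^\top A+b}{\|y\|_*})v(y)$ if $0\le\tfrac{y^\top A+b}{\|y\|_*}<\tfrac2c$, else $A$. Proxy: for $y\ne0$, $s(A,y,b)=A-\tfrac{y^\top A+b}{\|y\|_*}v(y)$ if $0\le\tfrac{y^\top A+b}{\|y\|_*}<\tfrac2c$ and $\ell(A)=-1$; $=A+(\tfrac2c-\tfrac{y^\top A+b}{\|y\|_*})v(y)$ if the range condition holds and $\ell(A)=+1$; $=A$ otherwise; $r(A,0,b)=s(A,0,b)=A$. Margin assumption: $d_*:=\max_{y\ne0,b}\min_{A\in\mathcal{A}}\ell(A)\frac{y^\top A+b}{\|y\|_*}$ attained at $(y_*,b_* )$, $y_*\ne0$, $d_*>0$. Boundedness: $D:=\sup_{A\in\mathcal{A}}\|A\|_2<\infty$; $C_{\|\cdot\|}=\max_y\|v(y)\|_2$; $\widetilde D=D+\tfrac2cC_{\|\cdot\|}$. Hinge loss $L_{\mathrm{hinge}}(q;\xi,\ell)=\max\{0,1-\ell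 q^\top\xi\}$. Projected strategic perceptron with closed convex cone $\mathbb{L}$ and stepsize $\gamma$: $q_0=(y_0,b_0)=(0,0)$; for $t=0,\dots,T$: agent $A_t$ is shown $(y_t,b_t)$, responds $r(A_t,y_t,b_t)$, is predicted $\hat\ell(r(A_t,y_t,b_t),y_t,b_t)$; with $\xi_t=(s(A_t,y_t,b_t),1)$, $z_{t+1}=q_t+\gamma\ell(A_t)\xi_t$ on a mistake, else $z_{t+1}=q_t$; $q_{t+1}=(y_{t+1},b_{t+1})=\Pi_{\mathbb{L}}(z_{t+1})$. Mistake set $\mathcal{M}_T=\{t\in\{0,\dots,T\}:\hat\ell(r(A_t,y_t,b_t),y_t,b_t)\ne\ell(A_t)\}$. *)

From HB Require Import structures.
From mathcomp Require Import all_boot all_order all_algebra.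
From mathcomp Require Import classical_sets reals.
Set Implicit Arguments. Unset Strict Implicit. Unset Printing Implicit Defensive.
Import Order.TTheory GRing.Theory Num.Theory.
Local Open Scope ring_scope.
Local Open Scope classical_set_scope.

Section Defs.
Variables (R : realType) (d : nat).
Notation vec := 'rV[R]_d.

Definition dot (x y : vec) : R := \sum_(i < d) x 0 i * y 0 i.

Definition norm2 (x : vec) : R := Num.sqrt (dot x x).

Definition is_norm (N : vec -> R) : Prop :=
  [/\ forall x, 0 <= N x,
      forall x, N x = 0 -> x = 0,
      forall (a : R) x, N (a *: x) = `|a| * N x &
      forall x y, N (x + y) <= N x + N y].

Definition dualnorm (N : vec -> R) (y : vec) : R :=
  sup [set dot y w | w in [set w | N w <= 1]].

Definition is_dual_selection (N : vec -> R) (v : vec -> vec) : Prop :=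
  [/\ v 0 = 0,
      forall y, y != 0 -> N (v y) <= 1 /\
                 (forall w, N w <= 1 -> dot y w <= dot y (v y)) &
      forall (lam : R) y, 0 < lam -> v (lam *: y) = v y].

Definition sgn (x : R) : R := if 0 <= x then 1 else -1.

Variables (N : vec -> R) (v : vec -> vec) (c : R) (lab : vec -> R).

Notation Nd := (dualnorm N).

Definition pred_label (x y : vec) (b : R) : R :=
  sgn (dot y x + b - 2 * Nd y / c).

Definition resp (A y : vec) (b : R) : vec :=
  if y == 0 then A else
  let m := (dot y A + b) / Nd y in
  if (0 <= m) && (m < 2 / c) then A + (2 / c - m) *: v y else A.

Definition proxy (A y : vec) (b : R) : vec :=
  if y == 0 then A else
  let m := (dot y A + b) / Nd y in
  if (0 <= m) && (m < 2 / c) then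
    (if lab A == -1 then A - m *: v y
     else if lab A == 1 then A + (2 / c - m) *: v y else A)
  else A.

Definition mistake (A y : vec) (b : R) : bool :=
  pred_label (resp A y b) y b != lab A.

(* projected strategic perceptron with projection proj (onto the cone L)
   and stepsize gamma; returns q_t = (y_t, b_t) *)
Fixpoint perceptron (proj : vec * R -> vec * R) (gamma : R)
    (Ag : nat -> vec) (t : nat) : vec * R :=
  match t with
  | 0 => (0, 0)
  | t'.+1 =>
    let q := perceptron proj gamma Ag t' in
    let A := Ag t' in
    let z := if mistake A q.1 q.2
             then (q.1 + (gamma * lab A) *: proxy A q.1 q.2,
                   q.2 + gamma * lab A * 1)
             else q in
    proj z
  end.

Definition margin (Ag : set vec) (y : vec) (b : R) : R :=
  inf [set lab A * (dot y A + b) / Nd y | A in Ag].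

End Defs.

(* hinge loss L(q; xi, l) = max{0, 1 - l q^T xi}, q = (qy,qb), xi = (xs,x1) *)
Definition hinge (R : realType) (d : nat) (qy : 'rV[R]_d) (qb : R)
  (xs : 'rV[R]_d) (x1 : R) (l : R) : R :=
  Num.max 0 (1 - l * (dot qy xs + qb * x1)).

From HB Require Import structures.
From mathcomp Require Import all_boot all_order all_algebra.
From mathcomp Require Import classical_sets reals boolp.
From mathcomp Require Import ring lra.
Set Implicit Arguments. Unset Strict Implicit. Unset Printing Implicit Defensive.
Import Order.TTheory GRing.Theory Num.Theory.
Local Open Scope ring_scope.
Local Open Scope classical_set_scope.

(* Proof idea: Novikoff's perceptron argument run on the proxies
   xi_t = [s(A_t, y_t, b_t); 1], against w* = [y*; b*].  On a mistake the
   proxy is misclassified by the current classifier, l_t <q_t, xi_t> <= 0,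
   while moving an agent by at most 2/c along v(y) costs at most
   (2/c) ||y*||_* of the margin, so l_t <w*, xi_t> >= ||y*||_* (d* - 2/c).
   The first fact gives |q_T|^2 <= |M_T| (D~^2 + 1), the second makes
   <q_T, w*> grow like |M_T| ||y*||_* (d* - 2/c), and Cauchy-Schwarz
   compares the two.  Rescaling the second fact gives the hinge-loss bound. *)

Section InnerProduct.
Variables (R : realType) (d : nat).
Implicit Types x y z : 'rV[R]_d.

Lemma dotC x y : dot x y = dot y x.
Proof. by apply: eq_bigr => i _; rewrite mulrC. Qed.

Lemma dotDl x y z : dot (x + y) z = dot x z + dot y z.
Proof. by rewrite /dot -big_split; apply: eq_bigr => i _; rewrite mxE mulrDl. Qed.

Lemma dotZl (a : R) x z : dot (a *: x) z = a * dot x z.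
Proof. by rewrite /dot mulr_sumr; apply: eq_bigr => i _; rewrite mxE mulrA. Qed.

Lemma dotDr x y z : dot z (x + y) = dot z x + dot z y.
Proof. by rewrite dotC dotDl !(dotC z). Qed.

Lemma dotZr (a : R) x z : dot z (a *: x) = a * dot z x.
Proof. by rewrite dotC dotZl dotC. Qed.

Lemma dot0l z : dot 0 z = 0.
Proof. by rewrite -(scale0r (0 : 'rV[R]_d)) dotZl mul0r. Qed.

Lemma dotxx_ge0 x : 0 <= dot x x.
Proof. by apply: sumr_ge0 => i _; rewrite -expr2 sqr_ge0. Qed.

Lemma dotxx_eq0 x : dot x x = 0 -> x = 0.
Proof.
move=> /eqP; rewrite psumr_eq0; last by move=> i _; rewrite -expr2 sqr_ge0.
move=> /allP x0; apply/rowP => i; rewrite mxE.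
by have := x0 i (mem_index_enum _); rewrite /= mulf_eq0 orbb => /eqP.
Qed.

Lemma dot_sqr_le x y : dot x y ^+ 2 <= dot x x * dot y y.
Proof.
have [yy_gt0|yy_lt0|yy0] := ltrgtP 0 (dot y y).
- have := dotxx_ge0 (dot y y *: x - dot x y *: y).
  rewrite !(dotDl, dotDr, dotZl, dotZr) -!scaleNr !(dotZl, dotZr) (dotC y x) => sq_ge0.
  by rewrite -(ler_pM2l yy_gt0); nra.
- by have := dotxx_ge0 y; rewrite leNgt yy_lt0.
- by rewrite (dotxx_eq0 (esym yy0)) dotC !dot0l expr2 !mulr0.
Qed.

Lemma norm2_ge0 x : 0 <= norm2 x.
Proof. exact: sqrtr_ge0. Qed.

Lemma norm2_sq x : norm2 x ^+ 2 = dot x x.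
Proof. by rewrite /norm2 sqr_sqrtr // dotxx_ge0. Qed.

Lemma dot_le_norm2 x y : `|dot x y| <= norm2 x * norm2 y.
Proof.
rewrite -(ler_pXn2r (_ : 0 < 2)%N) ?nnegrE ?mulr_ge0 ?norm2_ge0 //.
by rewrite real_normK ?num_real // exprMn !norm2_sq dot_sqr_le.
Qed.

Lemma norm2Z (a : R) x : norm2 (a *: x) = `|a| * norm2 x.
Proof. by rewrite /norm2 dotZl dotZr mulrA -expr2 sqrtrM ?sqr_ge0 // sqrtr_sqr. Qed.

Lemma norm2D_le x y : norm2 (x + y) <= norm2 x + norm2 y.
Proof.
rewrite -(ler_pXn2r (_ : 0 < 2)%N) ?nnegrE ?addr_ge0 ?norm2_ge0 //.
rewrite sqrrD !norm2_sq !(dotDl, dotDr) (dotC y x).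
have := le_trans (ler_norm _) (dot_le_norm2 x y); lra.
Qed.

End InnerProduct.

Section PairInnerProduct.
Variables (R : realType) (d : nat).
Implicit Types (p q : 'rV[R]_d * R) (s : 'rV[R]_d).

Definition pdot p q : R := dot p.1 q.1 + p.2 * q.2.

Lemma pdot_addZl p s (l : R) q :
  pdot (p.1 + l *: s, p.2 + l) q = pdot p q + l * pdot (s, 1) q.
Proof. by rewrite /pdot /= dotDl dotZl; ring. Qed.

Lemma pdot_addZ p s (l : R) :
  pdot (p.1 + l *: s, p.2 + l) (p.1 + l *: s, p.2 + l) =
  pdot p p + 2 * l * pdot p (s, 1) + l ^+ 2 * pdot (s, 1) (s, 1).
Proof. by rewrite /pdot /= !(dotDl, dotDr, dotZl, dotZr) (dotC s p.1); ring. Qed.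

Lemma pdot_sqr_le p q : pdot p q ^+ 2 <= pdot p p * pdot q q.
Proof.
case: p q => x b [y e]; rewrite /pdot /= -!norm2_sq -!expr2.
have := dot_le_norm2 x y; have := norm2_ge0 x; have := norm2_ge0 y.
set t := dot x y; set a := norm2 x; set u := norm2 y => u_ge0 a_ge0 t_le.
have sum_le : `|t + b * e| <= a * u + `|b| * `|e|.
  by apply: le_trans (ler_normD _ _) _; rewrite normrM lerD.
apply: (@le_trans _ _ ((a * u + `|b| * `|e|) ^+ 2)).
  rewrite -real_normK ?num_real // lerXn2r ?nnegrE ?normr_ge0 //.
  exact: le_trans (normr_ge0 _) sum_le.
rewrite -(real_normK (num_real b)) -(real_normK (num_real e)) -subr_ge0.
set B := `|b|; set E := `|e|.
have -> : (a ^+ 2 + B ^+ 2) * (u ^+ 2 + E ^+ 2) - (a * u + B * E) ^+ 2 =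
          (a * E - B * u) ^+ 2 by ring.
exact: sqr_ge0.
Qed.

End PairInnerProduct.

Section DualNorm.
Variables (R : realType) (d : nat) (N : 'rV[R]_d -> R) (v : 'rV[R]_d -> 'rV[R]_d).
Hypotheses (HN : is_norm N) (Hv : is_dual_selection N v).
Implicit Types x y w : 'rV[R]_d.

Lemma N0 : N 0 = 0.
Proof. by case: HN => _ _ NZ _; rewrite -(scale0r 0) NZ normr0 mul0r. Qed.

Lemma NN x : N (- x) = N x.
Proof. by case: HN => _ _ NZ _; rewrite -scaleN1r NZ normrN normr1 mul1r. Qed.

Lemma N_v_le1 y : N (v y) <= 1.
Proof.
case: Hv => v0 vmax _; have [->|y0] := eqVneq y 0; first by rewrite v0 N0.
by case: (vmax y y0).
Qed.

Lemma dot_v_max y w : N w <= 1 -> dot y w <= dot y (v y).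
Proof.
case: Hv => v0 vmax _; have [->|y0] := eqVneq y 0; first by rewrite !dot0l.
by case: (vmax y y0) => _; apply.
Qed.

Lemma dualnormE y : dualnorm N y = dot y (v y).
Proof.
rewrite /dualnorm; set S := [set dot y w | w in [set w | N w <= 1]].
have Sv : S (dot y (v y)) by exists (v y) => //; exact: N_v_le1.
have ubS : ubound S (dot y (v y)) by move=> _ [w Nw <-]; exact: dot_v_max.
apply/eqP; rewrite eq_le ge_sup //=; last by exists (dot y (v y)).
by apply: sup_upper_bound => //; split; exists (dot y (v y)).
Qed.

Lemma dualnorm_ub y w : N w <= 1 -> dot y w <= dualnorm N y.
Proof. by rewrite dualnormE; exact: dot_v_max. Qed.

Lemma dualnorm_ge0 y : 0 <= dualnorm N y.
Proof. by rewrite -(dot0l y) dotC; apply: dualnorm_ub; rewrite N0. Qed.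

Lemma dualnorm_gt0 y : y != 0 -> 0 < dualnorm N y.
Proof.
move=> y0; case: HN => N_ge0 N_eq0 NZ _.
have Ny : 0 < N y by rewrite lt_def N_ge0 andbT; apply: contra y0 => /eqP/N_eq0/eqP.
have Nunit : N ((N y)^-1 *: y) <= 1.
  by rewrite NZ ger0_norm ?invr_ge0 ?N_ge0 // mulVf ?gt_eqF.
apply: lt_le_trans (dualnorm_ub _ Nunit).
rewrite dotZr mulr_gt0 ?invr_gt0 // lt_def dotxx_ge0 andbT.
by apply: contra y0 => /eqP/dotxx_eq0/eqP.
Qed.

Lemma abs_dot_v_le y x : `|dot x (v y)| <= dualnorm N x.
Proof.
rewrite ler_norml dualnorm_ub ?N_v_le1 // andbT lerNl.
by rewrite -mulN1r -dotZr scaleN1r dualnorm_ub // NN N_v_le1.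
Qed.

Definition unit_row (i : 'I_d) : 'rV[R]_d := \row_j (i == j)%:R.

Lemma dot_unit_row i w : dot (unit_row i) w = w 0 i.
Proof.
rewrite /dot (bigD1 i) //= big1 => [|j ji]; first by rewrite !mxE eqxx mul1r addr0.
by rewrite !mxE eq_sym (negbTE ji) mul0r.
Qed.

(* The unit ball of N lies in a box whose half-widths are dual norms of the
   signed unit rows. *)
Lemma norm2_v_bounded : has_ubound (range (fun y => norm2 (v y))).
Proof.
pose k i := dualnorm N (unit_row i) + dualnorm N (- unit_row i).
have box w i : N w <= 1 -> `|w 0 i| <= k i.
  move=> Nw; rewrite ler_norml -dot_unit_row; apply/andP; split.
    rewrite lerNl -mulN1r -dotZl scaleN1r /k -[X in X <= _]add0r.
    by rewrite lerD ?dualnorm_ub ?dualnorm_ge0.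
  by rewrite /k -[X in X <= _]addr0 lerD ?dualnorm_ub ?dualnorm_ge0.
exists (Num.sqrt (\sum_i k i ^+ 2)) => _ [y _ <-].
rewrite /norm2 ler_sqrt ?sumr_ge0 // => [|i _]; last by rewrite sqr_ge0.
apply: ler_sum => i _; rewrite -expr2 -real_normK ?num_real //.
rewrite ler_pXn2r ?nnegrE ?normr_ge0 ?box ?N_v_le1 //.
exact: le_trans (normr_ge0 _) (box _ i (N_v_le1 y)).
Qed.

Lemma norm2_v_le_sup y : norm2 (v y) <= sup (range (fun y => norm2 (v y))).
Proof. by apply: ub_le_sup; [exact: norm2_v_bounded | exists y]. Qed.

End DualNorm.

Section StrategicResponse.
Variables (R : realType) (d : nat) (N : 'rV[R]_d -> R) (v : 'rV[R]_d -> 'rV[R]_d)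
  (c : R) (lab : 'rV[R]_d -> R).
Hypotheses (HN : is_norm N) (Hv : is_dual_selection N v) (c_gt0 : 0 < c).
Implicit Types x y A : 'rV[R]_d.

Let two_c_gt0 : 0 < 2 / c. Proof. by rewrite divr_gt0. Qed.

Lemma proxyE A y b : exists2 al : R, `|al| <= 2 / c &
  proxy N v c lab A y b = A + al *: v y.
Proof.
have stay : exists2 al : R, `|al| <= 2 / c & A = A + al *: v y.
  by exists 0; rewrite ?normr0 ?ltW // scale0r addr0.
rewrite /proxy; case: eqP => // _; set m := (dot y A + b) / _.
case: ifP => [/andP[m_ge0 m_lt] | _] //; case: eqP => _.
  exists (- m); last by rewrite scaleNr.
  by rewrite normrN ger0_norm // ltW.
case: eqP => // _; exists (2 / c - m) => //.
by rewrite ger0_norm; lra.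
Qed.

Lemma sgn_cases (x : R) : (sgn x = 1 /\ 0 <= x) \/ (sgn x = -1 /\ x < 0).
Proof. by rewrite /sgn; case: ifP => x_ge0; [left | right; rewrite ltNge x_ge0]. Qed.

(* In the manipulation range the response lands on the decision boundary
   and is labelled +1, so a mistake means lab A = -1, and the proxy moved
   by -m v(y) sits on the hyperplane itself; outside the range response and
   proxy are both A, and a mistake is an ordinary misclassification of A. *)
Lemma mistake_proxy_nonpos A y b : lab A = 1 \/ lab A = -1 ->
  mistake N v c lab A y b -> lab A * (dot y (proxy N v c lab A y b) + b) <= 0.
Proof.
move=> labA; rewrite /mistake /pred_label /resp /proxy (dualnormE HN Hv).
have [->|y0] := eqVneq y 0.
  rewrite !dot0l mulr0 mul0r subr0 add0r.
  by case: (sgn_cases b) => -[-> ?] /eqP; case: labA => ->; rewrite ?eqxx //; lra.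
have n_gt0 := dualnorm_gt0 HN Hv y0; rewrite (dualnormE HN Hv) in n_gt0.
set n := dot y (v y) in n_gt0 *; set m := (_ / n).
have Am : dot y A + b = m * n by rewrite /m divfK // gt_eqF.
have twon : 2 * n / c = 2 / c * n by rewrite mulrAC.
case: ifP => [/andP[m_ge0 m_lt] | out_range].
  rewrite dotDr dotZr -/n (_ : _ - _ = 0); last by rewrite mulrBl -twon; lra.
  rewrite /sgn lexx => /eqP lab_neg1.
  have -> : lab A = -1 by case: labA => // lab1; rewrite lab1 in lab_neg1.
  by rewrite eqxx dotDr -scaleNr dotZr -/n; lra.
rewrite Am twon.
case: (sgn_cases (m * n - 2 / c * n)) => -[-> side] /eqP;
  case: labA => ->; rewrite ?eqxx // => _.
  by have := mulr_gt0 two_c_gt0 n_gt0; lra.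
have m_lt : m < 2 / c by rewrite -(ltr_pM2r n_gt0); lra.
have m_lt0 : m < 0.
  by rewrite ltNge; apply: contraFN out_range => m_ge0; rewrite m_ge0 m_lt.
by rewrite mul1r ltW // pmulr_llt0.
Qed.

Lemma margin_le (Aset : set 'rV[R]_d) ys bs A :
  0 < margin N lab Aset ys bs -> Aset A ->
  margin N lab Aset ys bs <= lab A * (dot ys A + bs) / dualnorm N ys.
Proof.
rewrite /margin => m_gt0 AsetA; set S := [set _ | _ in _] in m_gt0 *.
have lbS : has_lbound S.
  by apply: contrapT => nolb; move: m_gt0; rewrite inf_out ?ltxx // => -[].
by apply: ge_inf => //; exists A.
Qed.

Lemma proxy_margin_ge (Aset : set 'rV[R]_d) ys bs A y b :
  ys != 0 -> 0 < margin N lab Aset ys bs -> Aset A -> lab A = 1 \/ lab A = -1 ->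
  dualnorm N ys * (margin N lab Aset ys bs - 2 / c) <=
  lab A * (dot ys (proxy N v c lab A y b) + bs).
Proof.
move=> ys0 m_gt0 AsetA labA; have n_gt0 := dualnorm_gt0 HN Hv ys0.
have := margin_le m_gt0 AsetA; rewrite ler_pdivlMr // => margin_A.
have [al al_le ->] := proxyE A y b; rewrite dotDr dotZr.
have move_cost : `|al * dot ys (v y)| <= 2 / c * dualnorm N ys.
  by rewrite normrM ler_pM ?normr_ge0 ?abs_dot_v_le.
move: move_cost margin_A; rewrite ler_norml => /andP[].
set t := al * _; set n := dualnorm N ys; set dm := margin _ _ _ _ _.
by case: labA => ->; lra.
Qed.

Lemma proxy_norm2_le A y b :
  norm2 (proxy N v c lab A y b) <= norm2 A + 2 / c * sup (range (fun y => norm2 (v y))).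
Proof.
have [al al_le ->] := proxyE A y b.
apply: le_trans (norm2D_le _ _) _; rewrite lerD2l norm2Z.
by rewrite ler_pM ?normr_ge0 ?norm2_ge0 ?(norm2_v_le_sup HN Hv).
Qed.

Lemma proxy_mistake_step (Aset : set 'rV[R]_d) ys bs (D : R) A y b :
  ys != 0 -> 0 < margin N lab Aset ys bs -> Aset A -> lab A = 1 \/ lab A = -1 ->
  norm2 A <= D -> mistake N v c lab A y b ->
  let xi := (proxy N v c lab A y b, 1) in
  [/\ lab A ^+ 2 = 1,
       dualnorm N ys * (margin N lab Aset ys bs - 2 / c) <= lab A * pdot xi (ys, bs),
       lab A * pdot (y, b) xi <= 0 &
       pdot xi xi <= (D + 2 / c * sup (range (fun y => norm2 (v y)))) ^+ 2 + 1].
Proof.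
move=> ys0 m_gt0 AsetA labA A_le mis xi; split.
- by case: labA => ->; rewrite ?sqrrN expr1n.
- by rewrite /pdot /= mul1r dotC; exact: proxy_margin_ge.
- by rewrite /pdot /= mulr1; exact: mistake_proxy_nonpos.
have s_le : norm2 xi.1 <= D + 2 / c * sup (range (fun y => norm2 (v y))).
  by apply: le_trans (proxy_norm2_le A y b) _; rewrite lerD2r.
rewrite /pdot mulr1 lerD2r -norm2_sq lerXn2r ?nnegrE ?norm2_ge0 //.
exact: le_trans (norm2_ge0 _) s_le.
Qed.

End StrategicResponse.

Section PerceptronInvariant.
Variables (R : realType) (d : nat) (N : 'rV[R]_d -> R) (v : 'rV[R]_d -> 'rV[R]_d)
  (c : R) (lab : 'rV[R]_d -> R) (Ag : nat -> 'rV[R]_d) (T : nat)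
  (w : 'rV[R]_d * R) (g B : R).

Local Notation q := (perceptron N v c lab id (1 : R) Ag).
Local Notation xi t := (proxy N v c lab (Ag t) (q t).1 (q t).2, 1 : R).
Local Notation mis t := (mistake N v c lab (Ag t) (q t).1 (q t).2).
Local Notation nmis t := (count (fun s => mis s) (iota 0 t))%:R.

Lemma perceptronS t : q t.+1 =
  if mis t then ((q t).1 + lab (Ag t) *: (xi t).1, (q t).2 + lab (Ag t)) else q t.
Proof. by rewrite /= mul1r mulr1. Qed.

Hypothesis mistake_step : forall t, (t <= T)%N -> mis t ->
  [/\ lab (Ag t) ^+ 2 = 1, g <= lab (Ag t) * pdot (xi t) w,
      lab (Ag t) * pdot (q t) (xi t) <= 0 & pdot (xi t) (xi t) <= B].

Lemma perceptron_invariant t : (t <= T.+1)%N ->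
  nmis t * g <= pdot (q t) w /\ pdot (q t) (q t) <= nmis t * B.
Proof.
elim: t => [_ | t IH t_le]; first by rewrite /pdot /= !dot0l !mul0r addr0.
have [IHg IHB] := IH (ltnW t_le).
rewrite perceptronS -[t.+1]addn1 iotaD count_cat /= addn0 natrD.
case mis_t: (mis t) => /=; last by rewrite addr0.
have [l2 gain neg xi_le] := mistake_step t_le mis_t.
by rewrite pdot_addZl pdot_addZ l2; split; lra.
Qed.

End PerceptronInvariant.

Lemma ler_sum_const (R : numDomainType) (I : eqType) (r : seq I) (F : I -> R) k :
  (forall i, i \in r -> F i <= k) -> \sum_(i <- r) F i <= k *+ size r.
Proof.
move=> F_le; rewrite big_seq (le_trans (ler_sum _ F_le)) // -big_seq.
by rewrite big_const_seq count_predT iter_addr_0.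
Qed.

Lemma hinge_le_of_margin (R : realType) (d : nat) (ys s : 'rV[R]_d) (bs l m n e : R) :
  0 < m -> 0 < n -> 0 <= e -> n * (m - e) <= l * (dot ys s + bs) ->
  hinge ((m * n)^-1 *: ys) (bs / (m * n)) s 1 l <= e / m.
Proof.
move=> m_gt0 n_gt0 e_ge0 margin_s; rewrite /hinge ge_max divr_ge0 ?(ltW m_gt0) //=.
have k_gt0 : 0 < (m * n)^-1 by rewrite invr_gt0 mulr_gt0.
have := margin_s; rewrite -(ler_pM2l k_gt0) (_ : _ * (n * _) = 1 - e / m).
  by rewrite dotZl; lra.
by field; rewrite !gt_eqF.
Qed.

Lemma le_div_sqr_of_growth (R : realType) (K a x B : R) :
  0 < a -> 0 <= K -> 0 <= B -> K * a <= x -> x ^+ 2 <= K * B -> K <= B / a ^+ 2.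
Proof.
move=> a_gt0 K_ge0 B_ge0 grow x_le; rewrite ler_pdivlMr ?exprn_gt0 //.
have [-> | K_neq0] := eqVneq K 0; first by rewrite mul0r.
have K_gt0 : 0 < K by rewrite lt_def K_neq0.
have Ka_ge0 : 0 <= K * a by rewrite mulr_ge0 ?ltW.
have Ka_le : (K * a) ^+ 2 <= x ^+ 2.
  by rewrite lerXn2r ?nnegrE ?(le_trans Ka_ge0 grow).
by rewrite -(ler_pM2l K_gt0) (_ : _ * (_ * _) = (K * a) ^+ 2) ?(le_trans Ka_le) //; ring.
Qed.

Theorem mainTheorem16 (R : realType) (d : nat)
  (N : 'rV[R]_d -> R) (v : 'rV[R]_d -> 'rV[R]_d) (c : R)
  (Aset : set 'rV[R]_d) (lab : 'rV[R]_d -> R)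
  (ystar : 'rV[R]_d) (bstar : R) (Ag : nat -> 'rV[R]_d) (T : nat) :
  is_norm N ->
  is_dual_selection N v ->
  0 < c ->
  (forall A, Aset A -> lab A = 1 \/ lab A = -1) ->
  (* margin assumption *)
  ystar != 0 ->
  (forall y b, y != 0 -> margin N lab Aset y b <= margin N lab Aset ystar bstar) ->
  0 < margin N lab Aset ystar bstar ->
  (* boundedness *)
  (exists M : R, forall A, Aset A -> norm2 A <= M) ->
  (* agents *)
  (forall t, (t <= T)%N -> Aset (Ag t)) ->
  let dstar := margin N lab Aset ystar bstar in
  let Nd := dualnorm N in
  let D := sup [set norm2 A | A in Aset] in
  let C := sup (range (fun y => norm2 (v y))) in
  let Dt := D + 2 / c * C in
  let q := perceptron N v c lab id 1 Ag in
  let mis := fun t => mistake N v c lab (Ag t) (q t).1 (q t).2 in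
  let MT := [seq t <- iota 0 T.+1 | mis t] in
  (\sum_(t <- MT)
      hinge ((dstar * Nd ystar)^-1 *: ystar) (bstar / (dstar * Nd ystar))
            (proxy N v c lab (Ag t) (q t).1 (q t).2) 1 (lab (Ag t))
     <= 2 / (c * dstar) * (size MT)%:R)
  /\
  (2 / c < dstar ->
     (size MT)%:R <= (norm2 ystar ^+ 2 + bstar ^+ 2) / Nd ystar ^+ 2
                     * ((Dt ^+ 2 + 1) / Num.max 0 (dstar - 2 / c) ^+ 2)).
Proof.
move=> HN Hv c_gt0 labAg ys0 _ m_gt0 [M M_ub] AsetAg dstar Nd D C Dt q mis MT.
have n_gt0 : 0 < Nd ystar := dualnorm_gt0 HN Hv ys0.
split.
  rewrite mulr_natr; apply: ler_sum_const => t.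
  rewrite mem_filter mem_iota add0n => /andP[_ /AsetAg AsetAt].
  rewrite (invfM c) mulrA; apply: hinge_le_of_margin; rewrite ?divr_ge0 ?(ltW c_gt0) //.
  exact: (proxy_margin_ge HN Hv c_gt0 (q t).1 (q t).2 ys0 m_gt0 AsetAt (labAg _ AsetAt)).
move=> dstar_gt; have g_gt0 : 0 < dstar - 2 / c by rewrite subr_gt0.
have D_ub t : (t <= T)%N -> norm2 (Ag t) <= D.
  move=> t_le; apply: ub_le_sup; last by exists (Ag t) => //; exact: AsetAg.
  by exists M => _ [A AsetA <-]; exact: M_ub.
have [grow bound] := perceptron_invariant (w := (ystar, bstar))
  (g := Nd ystar * (dstar - 2 / c)) (B := Dt ^+ 2 + 1)
  (fun t t_le => proxy_mistake_step HN Hv c_gt0 ys0 m_gt0 (AsetAg t t_le)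
                   (labAg _ (AsetAg t t_le)) (D_ub t t_le)) (leqnn T.+1).
have U_ge0 : 0 <= pdot (ystar, bstar) (ystar, bstar).
  by rewrite /pdot /= -norm2_sq -expr2 addr_ge0 ?sqr_ge0.
rewrite size_filter (max_r (ltW g_gt0)).
move: grow bound; set g := dstar - 2 / c in g_gt0 *; set n := Nd ystar in n_gt0 *.
move=> grow bound.
have -> : (norm2 ystar ^+ 2 + bstar ^+ 2) / n ^+ 2 * ((Dt ^+ 2 + 1) / g ^+ 2)
    = (Dt ^+ 2 + 1) * pdot (ystar, bstar) (ystar, bstar) / (n * g) ^+ 2.
  by rewrite /pdot /= -norm2_sq -expr2; field; rewrite !gt_eqF.
apply: (le_div_sqr_of_growth _ _ _ grow).
- by rewrite mulr_gt0.
- exact: ler0n.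
- exact: mulr_ge0 (addr_ge0 (sqr_ge0 _) ler01) U_ge0.
by rewrite mulrA (le_trans (pdot_sqr_le _ _)) // ler_wpM2r.
Qed.
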